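(* There exists a constant $M>0$ such that for all $t\ge s\ge0$, \[ |K_1(t,s)|\le M\,E(t,s)\quad\text{and}\quad |K_2(t,s)|\le M\,E(t,s), \] where $K_1(t,s)=\omega^2R(t,s)-\partial_sR(t,s)$ and $K_2(t,s)=\omega^2\partial_tR(t,s)-\partial_t\partial_sR(t,s)$.
   Context: Standing assumptions: $\omega>0$ is a constant; $p\in C^1([0,\infty))$ with $p(t)>0$ and $p'(t)<0$ for all $t\ge0$, $\int_0^\infty p(t)\,dt=\infty$ and $\int_0^\infty p(t)^2\,dt<\infty$. Notation: $E(t,s)=\exp(-\frac12\int_s^tp(\tau)\,d\tau)$ for $0\le s\le t$; $q(t)=-\frac14p(t)^2-\frac12p'(t)$. For each $s\ge0$, $t\mapsto G_u(t,s)$ ($t\ge s$) is the solution of $\partial_t^2G_u+(\omega^2+q(t))G_u=0$ with $G_u(s,s)=0$, $\partial_tG_u(t,s)|_{t=s}=1$; $R(t,s)=E(t,s)G_u(t,s)$. *)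

From Stdlib Require Import Reals.
From Coquelicot Require Import Coquelicot.
Open Scope R_scope.

Definition Efun (p : R -> R) (t s : R) : R := exp (- (1/2) * RInt p s t).

Definition qfun (p : R -> R) (t : R) : R := - (1/4) * (p t)^2 - (1/2) * Derive p t.

Definition is_Gu (p : R -> R) (w : R) (G : R -> R -> R) : Prop :=
  forall s : R,
    (forall t, ex_derive (fun tau => G tau s) t) /\
    (forall t, is_derive (fun tau => Derive (fun tau' => G tau' s) tau) t
                         (- (w ^ 2 + qfun p t) * G t s)) /\
    G s s = 0 /\
    Derive (fun tau => G tau s) s = 1.

Definition Rfun (p : R -> R) (G : R -> R -> R) (t s : R) : R := Efun p t s * G t s.

Definition K1 (p : R -> R) (w : R) (G : R -> R -> R) (t s : R) : R :=
  w ^ 2 * Rfun p G t s - Derive (fun s' => Rfun p G t s') s.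

Definition K2 (p : R -> R) (w : R) (G : R -> R -> R) (t s : R) : R :=
  w ^ 2 * Derive (fun t' => Rfun p G t' s) t
  - Derive (fun t' => Derive (fun s' => Rfun p G t' s') s) t.

From Stdlib Require Import Reals Lra Psatz Classical FunctionalExtensionality.
From Coquelicot Require Import Coquelicot.
Open Scope R_scope.

(* The energy w^2 y^2 + y'^2 of a solution of y'' + (w^2 + q) y = 0 has logarithmic derivative
   at most |q| / w, and |q| <= p^2/4 - p'/2, whose integral over [0, oo) is finite because p is
   positive, decreasing and square integrable; hence every solution is bounded on [0, oo) together
   with its derivative.  Fixing two solutions u = G(., 0) and v = G(., c) with nonzero Wronskian W,
   uniqueness for the initial value problem gives G(t,s) = (u(s) v(t) - u(t) v(s)) / W, so G,
   d_s G, d_t G and d_t d_s G are bounded for t, s >= 0.  Since d_s E = p(s) E / 2 and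
   d_t E = - p(t) E / 2 with 0 < p <= p(0), both K1 and K2 are E times a bounded quantity. *)

Lemma nonincreasing_of_derive_nonpos (f df : R -> R) (a b : R) : a <= b ->
  (forall x, is_derive f x (df x)) -> (forall x, a <= x <= b -> df x <= 0) ->
  f b <= f a.
Proof.
  intros hab hf hneg.
  destruct (MVT_gen f a b df) as [c [hc hfc]].
  - intros x _; apply hf.
  - intros x _; apply continuity_pt_filterlim, (ex_derive_continuous (V := R_NormedModule)).
    eexists; apply hf.
  - rewrite Rmin_left, Rmax_right in hc by lra.
    specialize (hneg c hc); nra.
Qed.

Lemma constant_of_derive_0 (f : R -> R) :
  (forall x, is_derive f x 0) -> forall a b, f a = f b.
Proof.
  intros hf a b.
  destruct (MVT_gen f a b (fun _ => 0)) as [c [_ hfc]].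
  - intros x _; apply hf.
  - intros x _; apply continuity_pt_filterlim, (ex_derive_continuous (V := R_NormedModule)).
    eexists; apply hf.
  - lra.
Qed.

Lemma continuous_of_ex_derive (f : R -> R) :
  (forall t, ex_derive f t) -> forall t, continuous f t.
Proof. intros hf t; apply (ex_derive_continuous (V := R_NormedModule)), hf. Qed.

Lemma continuous_pow2 (f : R -> R) :
  (forall t, continuous f t) -> forall t, continuous (fun x => f x ^ 2) t.
Proof.
  intros hf t; apply (continuous_ext (fun x => f x * f x)); [intros; simpl; ring |].
  apply (continuous_mult f f); apply hf.
Qed.

(* [auto_derive] leaves eta-expanded [Derive (fun x => f x)], which rewriting with facts about
   [Derive f] does not match. *)
Ltac fold_Derive :=
  repeat match goal with
  | |- context [Derive (fun x => ?f x)] => change (Derive (fun x => f x)) with (Derive f)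
  end.

Lemma gronwall (e de g dg : R -> R) (a b : R) : a <= b ->
  (forall x, is_derive e x (de x)) -> (forall x, is_derive g x (dg x)) ->
  (forall x, a <= x <= b -> de x <= dg x * e x) ->
  e b <= e a * exp (g b - g a).
Proof.
  intros hab he hg hde.
  assert (hmon : e b * exp (- g b) <= e a * exp (- g a)).
  { apply (nonincreasing_of_derive_nonpos (fun x => e x * exp (- g x))
             (fun x => (de x - dg x * e x) * exp (- g x)) a b hab).
    - intros x; specialize (he x); specialize (hg x).
      auto_derive; [split; [eexists; apply he | split; [eexists; apply hg | auto]] |].
      fold_Derive; rewrite (is_derive_unique _ _ _ he), (is_derive_unique _ _ _ hg); ring.
    - intros x hx; specialize (hde x hx); pose proof (exp_pos (- g x)); nra. }
  replace (e a * exp (g b - g a)) with (e a * exp (- g a) * exp (g b))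
    by (unfold Rminus; rewrite Rplus_comm, exp_plus; ring).
  replace (e b) with (e b * exp (- g b) * exp (g b))
    by (rewrite Rmult_assoc, <- exp_plus, Rplus_opp_l, exp_0; ring).
  apply Rmult_le_compat_r; [apply Rlt_le, exp_pos | exact hmon].
Qed.

Lemma gronwall_backward (e de g dg : R -> R) (a b : R) : a <= b ->
  (forall x, is_derive e x (de x)) -> (forall x, is_derive g x (dg x)) ->
  (forall x, a <= x <= b -> - (dg x * e x) <= de x) ->
  e a <= e b * exp (g b - g a).
Proof.
  intros hab he hg hde.
  assert (hmon : - (e b * exp (g b)) <= - (e a * exp (g a))).
  { apply (nonincreasing_of_derive_nonpos (fun x => - (e x * exp (g x)))
             (fun x => - ((de x + dg x * e x) * exp (g x))) a b hab).
    - intros x; specialize (he x); specialize (hg x).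
      auto_derive; [split; [eexists; apply he | split; [eexists; apply hg | auto]] |].
      fold_Derive; rewrite (is_derive_unique _ _ _ he), (is_derive_unique _ _ _ hg); ring.
    - intros x hx; specialize (hde x hx); pose proof (exp_pos (g x)); nra. }
  replace (e b * exp (g b - g a)) with (e b * exp (g b) * exp (- g a))
    by (unfold Rminus; rewrite exp_plus; ring).
  replace (e a) with (e a * exp (g a) * exp (- g a))
    by (rewrite Rmult_assoc, <- exp_plus, Rplus_opp_r, exp_0; ring).
  apply Rmult_le_compat_r; [apply Rlt_le, exp_pos | lra].
Qed.

Lemma Rabs_cross_le_weighted_squares (w a b c : R) : 0 < w ->
  Rabs (2 * c * a * b) <= Rabs c / w * (w ^ 2 * a ^ 2 + b ^ 2).
Proof.
  intros hw.
  assert (amgm : 2 * w * Rabs a * Rabs b <= w ^ 2 * a ^ 2 + b ^ 2).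
  { rewrite <- (pow2_abs a), <- (pow2_abs b).
    pose proof (pow2_ge_0 (w * Rabs a - Rabs b)); nra. }
  rewrite !Rabs_mult, (Rabs_right 2) by lra.
  apply (Rmult_le_reg_l w); [lra |].
  replace (w * (Rabs c / w * (w ^ 2 * a ^ 2 + b ^ 2)))
    with (Rabs c * (w ^ 2 * a ^ 2 + b ^ 2)) by (field; lra).
  pose proof (Rabs_pos c); nra.
Qed.

Lemma Rabs_le_sqrt (x A : R) : x ^ 2 <= A -> Rabs x <= sqrt A.
Proof. intros h; rewrite <- sqrt_Rsqr_abs; apply sqrt_le_1_alt; rewrite Rsqr_pow2; exact h. Qed.

Section Solutions.

Variables (p : R -> R) (w : R).
Hypothesis hw : 0 < w.

Definition is_solution (y : R -> R) : Prop :=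
  (forall t, ex_derive y t) /\
  (forall t, is_derive (Derive y) t (- (w ^ 2 + qfun p t) * y t)).

Lemma is_solution_lin (y1 y2 : R -> R) (a b : R) :
  is_solution y1 -> is_solution y2 -> is_solution (fun x => a * y1 x + b * y2 x).
Proof.
  intros [d1 dd1] [d2 dd2].
  assert (hD : forall x, Derive (fun x => a * y1 x + b * y2 x) x
                         = a * Derive y1 x + b * Derive y2 x).
  { intros x; apply is_derive_unique; auto_derive; [repeat split; auto | fold_Derive; ring]. }
  split.
  - intros t; auto_derive; repeat split; auto.
  - intros t; apply (is_derive_ext (fun x => a * Derive y1 x + b * Derive y2 x)).
    { intros x; symmetry; apply hD. }
    specialize (dd1 t); specialize (dd2 t).
    auto_derive; [split; [eexists; apply dd1 | split; [eexists; apply dd2 | auto]] |].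
    fold_Derive; rewrite (is_derive_unique _ _ _ dd1), (is_derive_unique _ _ _ dd2); ring.
Qed.

Definition wronskian (u v : R -> R) (x : R) : R := u x * Derive v x - Derive u x * v x.

Lemma wronskian_constant (u v : R -> R) :
  is_solution u -> is_solution v -> forall s t, wronskian u v s = wronskian u v t.
Proof.
  intros [du ddu] [dv ddv].
  apply constant_of_derive_0; intros x; unfold wronskian.
  specialize (ddu x); specialize (ddv x).
  auto_derive; [repeat split; auto; eexists; eauto |].
  fold_Derive; rewrite (is_derive_unique _ _ _ ddu), (is_derive_unique _ _ _ ddv); ring.
Qed.

Definition energy (y : R -> R) (x : R) : R := w ^ 2 * y x ^ 2 + Derive y x ^ 2.

Lemma energy_ge0 (y : R -> R) (x : R) : 0 <= energy y x.
Proof. unfold energy; nra. Qed.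

Lemma energy_derive (y : R -> R) : is_solution y ->
  forall x, is_derive (energy y) x (2 * (- qfun p x) * y x * Derive y x).
Proof.
  intros [dy ddy] x; specialize (ddy x); unfold energy.
  auto_derive; [split; [auto | split; [eexists; apply ddy | auto]] |].
  fold_Derive; rewrite (is_derive_unique _ _ _ ddy); ring.
Qed.

Lemma energy_derive_bound (y : R -> R) (x : R) :
  Rabs (2 * (- qfun p x) * y x * Derive y x) <= Rabs (qfun p x) / w * energy y x.
Proof. rewrite <- (Rabs_Ropp (qfun p x)); apply Rabs_cross_le_weighted_squares, hw. Qed.

Lemma Rabs_le_of_energy_le (y : R -> R) (t C0 : R) : energy y t <= C0 ->
  Rabs (y t) <= sqrt (C0 / w ^ 2 + C0) /\ Rabs (Derive y t) <= sqrt (C0 / w ^ 2 + C0).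
Proof.
  unfold energy; intros hE.
  assert (hw2 : 0 < w ^ 2) by (apply pow_lt, hw).
  pose proof (pow2_ge_0 (y t)); pose proof (pow2_ge_0 (Derive y t)).
  assert (0 <= w ^ 2 * y t ^ 2) by nra.
  assert (y t ^ 2 <= C0 / w ^ 2).
  { replace (y t ^ 2) with (w ^ 2 * y t ^ 2 / w ^ 2) by (field; lra).
    apply Rmult_le_compat_r; [apply Rlt_le, Rinv_0_lt_compat, hw2 | lra]. }
  split; apply Rabs_le_sqrt; lra.
Qed.

End Solutions.

Section Uniqueness.

Variables (p : R -> R) (w : R).
Hypothesis hw : 0 < w.
Hypothesis hp_diff : forall t, ex_derive p t.
Hypothesis hp_C1 : forall t, continuous (Derive p) t.

Lemma qfun_continuous (t : R) : continuous (qfun p) t.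
Proof.
  unfold qfun.
  apply (continuous_minus (fun t => - (1/4) * p t ^ 2) (fun t => 1/2 * Derive p t)).
  - apply (continuous_mult (fun _ => - (1/4)) (fun t => p t ^ 2)); [apply continuous_const |].
    apply continuous_pow2, continuous_of_ex_derive, hp_diff.
  - apply (continuous_mult (fun _ => 1/2) (Derive p)); [apply continuous_const | apply hp_C1].
Qed.

Lemma solution_eq0 (y : R -> R) (a : R) : is_solution p w y ->
  y a = 0 -> Derive y a = 0 -> forall t, y t = 0.
Proof.
  intros hy ya dya t.
  assert (ea : energy w y a = 0) by (unfold energy; rewrite ya, dya; ring).
  destruct (continuity_ab_maj (fun x => Rabs (qfun p x)) (Rmin a t) (Rmax a t))
    as [m [hm _]]; [apply Rmin_Rmax |
     intros x _; apply continuity_pt_filterlim, continuous_comp;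
       [apply qfun_continuous | apply continuous_Rabs] |].
  set (L := Rabs (qfun p m) / w).
  assert (hde : forall x, Rmin a t <= x <= Rmax a t ->
    Rabs (2 * (- qfun p x) * y x * Derive y x) <= L * energy w y x).
  { intros x hx; eapply Rle_trans; [apply energy_derive_bound, hw |].
    apply Rmult_le_compat_r; [apply energy_ge0 |].
    apply Rmult_le_compat_r; [apply Rlt_le, Rinv_0_lt_compat, hw | apply hm, hx]. }
  assert (hL : forall x, is_derive (fun x => L * x) x L)
    by (intros x; auto_derive; [auto | ring]).
  assert (et : energy w y t <= 0).
  { destruct (Rle_or_lt a t) as [hat | hta].
    - rewrite Rmin_left, Rmax_right in hde by lra.
      eapply Rle_trans; [apply (gronwall _ _ _ _ a t hat (energy_derive _ _ _ hy) hL) |].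
      + intros x hx; eapply Rle_trans; [apply Rle_abs | apply hde, hx].
      + rewrite ea; lra.
    - rewrite Rmin_right, Rmax_left in hde by lra.
      eapply Rle_trans;
        [apply (gronwall_backward _ _ _ _ t a (Rlt_le _ _ hta) (energy_derive _ _ _ hy) hL) |].
      + intros x hx; apply Ropp_le_cancel; rewrite Ropp_involutive.
        eapply Rle_trans; [apply Rle_abs | rewrite Rabs_Ropp; apply hde, hx].
      + rewrite ea; lra. }
  unfold energy in et.
  pose proof (pow2_ge_0 (Derive y t)); pose proof (pow2_ge_0 (y t)).
  assert (hw2 : 0 < w ^ 2) by (apply pow_lt, hw).
  assert (y t ^ 2 = 0) by nra.
  destruct (Req_dec (y t) 0) as [| hy0]; [assumption | now apply (pow_nonzero _ 2) in hy0].
Qed.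

Lemma solution_representation (u v y : R -> R) (s : R) :
  is_solution p w u -> is_solution p w v -> is_solution p w y ->
  wronskian u v s <> 0 -> y s = 0 -> Derive y s = 1 ->
  forall t, y t = (u s * v t - u t * v s) / wronskian u v s.
Proof.
  intros hu hv hy hW ys dys t.
  set (W := wronskian u v s) in *.
  set (z := fun x => 1 * y x + (-1) * ((u s / W) * v x + (- (v s / W)) * u x)).
  assert (hz : is_solution p w z) by (apply is_solution_lin; [| apply is_solution_lin]; auto).
  assert (dz : Derive z s = 0).
  { destruct hu as [du _]; destruct hv as [dv _]; destruct hy as [dy _].
    rewrite (is_derive_unique z s (1 * Derive y s + (-1) * ((u s / W) * Derive v s
                                     + (- (v s / W)) * Derive u s)));
      [| unfold z; auto_derive; [repeat split; auto | fold_Derive; ring]].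
    rewrite dys; unfold W, wronskian in *; field; auto. }
  assert (z0 := solution_eq0 z s hz ltac:(unfold z; rewrite ys; field; auto) dz t).
  unfold z in z0; apply Rminus_diag_uniq; rewrite <- z0; field; auto.
Qed.

End Uniqueness.

Lemma is_derive_RInt_upper (f : R -> R) (a x : R) : (forall t, continuous f t) ->
  is_derive (fun t => RInt f a t) x (f x).
Proof.
  intros hf; apply (is_derive_RInt (V := R_CompleteNormedModule) f _ a x); [| apply hf].
  apply filter_forall; intros b.
  apply (RInt_correct (V := R_CompleteNormedModule)).
  apply (ex_RInt_continuous (V := R_CompleteNormedModule)); intros; apply hf.
Qed.

Lemma RInt_bounded_of_ex_RInt_gen (f : R -> R) (a : R) :
  (forall t, continuous f t) -> (forall t, 0 <= f t) ->
  ex_RInt_gen f (at_point a) (Rbar_locally p_infty) ->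
  exists l, forall t, a <= t -> RInt f a t <= l.
Proof.
  intros hf hpos [l hl].
  destruct (hl (fun y => Rabs (y - l) < 1)) as [Q P hQ [M hM] hQP].
  { exists (mkposreal 1 Rlt_0_1); intros y hy; apply hy. }
  exists (l + 1); intros t ht.
  set (T := Rmax t M + 1).
  assert (tT : t <= T) by (pose proof (Rmax_l t M); unfold T; lra).
  destruct (hQP a T hQ (hM T ltac:(pose proof (Rmax_r t M); unfold T; lra))) as [y [hy hyl]].
  simpl in hy.
  assert (hex : forall b c, ex_RInt f b c)
    by (intros; apply (ex_RInt_continuous (V := R_CompleteNormedModule)); auto).
  assert (hChasles : RInt f a t + RInt f t T = y).
  { rewrite <- (is_RInt_unique _ _ _ _ hy); apply (RInt_Chasles f); auto. }
  assert (0 <= RInt f t T) by (apply RInt_ge_0; auto).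
  apply Rabs_lt_between in hyl; lra.
Qed.

Lemma qfun_abs_le (p : R -> R) (t : R) : Derive p t <= 0 ->
  Rabs (qfun p t) <= / 4 * p t ^ 2 - / 2 * Derive p t.
Proof. intros hp'; unfold qfun; pose proof (pow2_ge_0 (p t)); apply Rabs_le; lra. Qed.

Lemma exp_le_compat (x y : R) : x <= y -> exp x <= exp y.
Proof. intros [hlt | ->]; [left; apply exp_increasing, hlt | right; reflexivity]. Qed.

Section Boundedness.

Variables (p : R -> R) (w : R).
Hypothesis hw : 0 < w.
Hypothesis hp_diff : forall t, ex_derive p t.
Hypothesis hp_pos : forall t, 0 <= t -> 0 < p t.
Hypothesis hp_dec : forall t, 0 <= t -> Derive p t < 0.
Hypothesis hp_sq : ex_RInt_gen (fun t => p t ^ 2) (at_point 0) (Rbar_locally p_infty).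

Lemma Rabs_p_le_p0 (t : R) : 0 <= t -> Rabs (p t) <= p 0.
Proof.
  intros ht; rewrite Rabs_right by (apply Rle_ge, Rlt_le, hp_pos, ht).
  apply (nonincreasing_of_derive_nonpos p (Derive p) 0 t ht).
  - intros x; apply Derive_correct, hp_diff.
  - intros x hx; apply Rlt_le, hp_dec, hx.
Qed.

Lemma energy_bounded (y : R -> R) : is_solution p w y ->
  exists C0, forall t, 0 <= t -> energy w y t <= C0.
Proof.
  intros hy.
  assert (hp2 := continuous_pow2 p (continuous_of_ex_derive p hp_diff)).
  destruct (RInt_bounded_of_ex_RInt_gen _ 0 hp2 (fun t => pow2_ge_0 _) hp_sq) as [l hl].
  set (I := fun t => RInt (fun x => p x ^ 2) 0 t).
  assert (hI : forall t, is_derive I t (p t ^ 2)) by (intros; apply is_derive_RInt_upper, hp2).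
  assert (hI0 : I 0 = 0) by (unfold I; rewrite RInt_point; reflexivity).
  assert (hIl : forall t, 0 <= t -> I t <= l) by exact hl.
  clearbody I.
  set (F := fun t => / w * (/ 4 * I t - / 2 * p t)).
  set (dF := fun t => / w * (/ 4 * p t ^ 2 - / 2 * Derive p t)).
  assert (hF : forall t, is_derive F t (dF t)).
  { intros t; specialize (hI t); pose proof (Derive_correct p t (hp_diff t)) as hd.
    unfold F, dF; auto_derive; [repeat split; [eexists; apply hI | auto] |].
    fold_Derive; rewrite (is_derive_unique _ _ _ hI); field; lra. }
  assert (hgrowth : forall x, 0 <= x ->
    2 * (- qfun p x) * y x * Derive y x <= dF x * energy w y x).
  { intros x hx; eapply Rle_trans; [apply Rle_abs |].
    eapply Rle_trans; [apply energy_derive_bound, hw |].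
    apply Rmult_le_compat_r; [apply energy_ge0 |].
    unfold dF, Rdiv; rewrite Rmult_comm; apply Rmult_le_compat_l.
    - apply Rlt_le, Rinv_0_lt_compat, hw.
    - apply qfun_abs_le, Rlt_le, hp_dec, hx. }
  exists (energy w y 0 * exp (/ w * (/ 4 * l + / 2 * p 0))); intros t ht.
  eapply Rle_trans;
    [apply (gronwall _ _ _ _ 0 t ht (energy_derive _ _ _ hy) hF);
     intros x hx; apply hgrowth, hx |].
  apply Rmult_le_compat_l; [apply energy_ge0 |].
  apply exp_le_compat; unfold F; rewrite hI0.
  pose proof (hIl t ht); pose proof (hp_pos t ht); pose proof (Rinv_0_lt_compat w hw).
  nra.
Qed.

Lemma solution_bounded (y : R -> R) : is_solution p w y ->
  exists C, forall t, 0 <= t -> Rabs (y t) <= C /\ Rabs (Derive y t) <= C.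
Proof.
  intros hy; destruct (energy_bounded y hy) as [C0 hC0].
  exists (sqrt (C0 / w ^ 2 + C0)); intros t ht.
  apply Rabs_le_of_energy_le, hC0; [exact hw | exact ht].
Qed.

End Boundedness.

Section Kernel.

Variables (p : R -> R) (w : R) (g gs gt gts : R -> R -> R).
Hypothesis hp : forall t, continuous p t.
Hypothesis hgs : forall t s, is_derive (fun s' => g t s') s (gs t s).
Hypothesis hgt : forall t s, is_derive (fun t' => g t' s) t (gt t s).
Hypothesis hgts : forall t s, is_derive (fun t' => gs t' s) t (gts t s).

Lemma Efun_derive_t (t s : R) :
  is_derive (fun t' => Efun p t' s) t (- (1/2) * p t * Efun p t s).
Proof.
  unfold Efun; auto_derive; [| change (RInt (fun x => p x)) with (RInt p); ring].
  split; [apply (ex_RInt_continuous (V := R_CompleteNormedModule)); intros; apply hp |].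
  split; [apply filter_forall; intros; apply continuity_pt_filterlim, hp | exact I].
Qed.

Lemma Efun_derive_s (t s : R) :
  is_derive (fun s' => Efun p t s') s (1/2 * p s * Efun p t s).
Proof.
  unfold Efun; auto_derive; [| change (RInt (fun x => p x)) with (RInt p); ring].
  split; [apply (ex_RInt_continuous (V := R_CompleteNormedModule)); intros; apply hp |].
  split; [apply filter_forall; intros; apply continuity_pt_filterlim, hp | exact I].
Qed.

Lemma Rfun_derive_s (t s : R) : Derive (fun s' => Rfun p g t s') s
  = Efun p t s * (1/2 * p s * g t s + gs t s).
Proof.
  apply is_derive_unique; unfold Rfun.
  eapply is_derive_ext; [intros; reflexivity |].
  replace (Efun p t s * (1/2 * p s * g t s + gs t s))
    with (1/2 * p s * Efun p t s * g t s + Efun p t s * gs t s) by ring.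
  apply (is_derive_mult (fun s' => Efun p t s') (fun s' => g t s'));
    [apply Efun_derive_s | apply hgs | intros; apply Rmult_comm].
Qed.

Lemma Rfun_derive_t (t s : R) : Derive (fun t' => Rfun p g t' s) t
  = Efun p t s * (- (1/2) * p t * g t s + gt t s).
Proof.
  apply is_derive_unique; unfold Rfun.
  eapply is_derive_ext; [intros; reflexivity |].
  replace (Efun p t s * (- (1/2) * p t * g t s + gt t s))
    with (- (1/2) * p t * Efun p t s * g t s + Efun p t s * gt t s) by ring.
  apply (is_derive_mult (fun t' => Efun p t' s) (fun t' => g t' s));
    [apply Efun_derive_t | apply hgt | intros; apply Rmult_comm].
Qed.

Definition K1_factor (w g gs ps : R) : R := w ^ 2 * g - (1/2 * ps * g + gs).

Definition K2_factor (w g gs gt gts ps pt : R) : R :=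
  w ^ 2 * (- (1/2) * pt * g + gt)
  - (- (1/2) * pt * (1/2 * ps * g + gs) + 1/2 * ps * gt + gts).

Lemma K1_eq (t s : R) :
  K1 p w g t s = Efun p t s * K1_factor w (g t s) (gs t s) (p s).
Proof. unfold K1, K1_factor; rewrite Rfun_derive_s; unfold Rfun; ring. Qed.

Lemma K2_eq (t s : R) :
  K2 p w g t s = Efun p t s * K2_factor w (g t s) (gs t s) (gt t s) (gts t s) (p s) (p t).
Proof.
  unfold K2, K2_factor.
  rewrite Rfun_derive_t, (Derive_ext _ _ _ (fun t' => Rfun_derive_s t' s)).
  rewrite (is_derive_unique _ t (- (1/2) * p t * Efun p t s * (1/2 * p s * g t s + gs t s)
                                  + Efun p t s * (1/2 * p s * gt t s + gts t s))).
  - ring.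
  - apply (is_derive_mult (fun t' => Efun p t' s) (fun t' => 1/2 * p s * g t' s + gs t' s));
      [apply Efun_derive_t | | intros; apply Rmult_comm].
    specialize (hgt t s); specialize (hgts t s).
    auto_derive; [repeat split; eexists; eauto |].
    replace (Derive (fun x => g x s) t) with (gt t s) by (symmetry; apply is_derive_unique, hgt).
    replace (Derive (fun x => gs x s) t) with (gts t s) by (symmetry; apply is_derive_unique, hgts).
    ring.
Qed.

End Kernel.

Lemma Rabs_mult_le (x y X Y : R) : Rabs x <= X -> Rabs y <= Y -> Rabs (x * y) <= X * Y.
Proof. intros; rewrite Rabs_mult; apply Rmult_le_compat; auto; apply Rabs_pos. Qed.

Lemma Rabs_plus_le (x y X Y : R) : Rabs x <= X -> Rabs y <= Y -> Rabs (x + y) <= X + Y.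
Proof. intros; eapply Rle_trans; [apply Rabs_triang | lra]. Qed.

Lemma Rabs_minus_le (x y X Y : R) : Rabs x <= X -> Rabs y <= Y -> Rabs (x - y) <= X + Y.
Proof. intros; eapply Rle_trans; [apply Rabs_triang | rewrite Rabs_Ropp; lra]. Qed.

Lemma Rabs_opp_le (x X : R) : Rabs x <= X -> Rabs (- x) <= X.
Proof. intros; rewrite Rabs_Ropp; assumption. Qed.

(* Builds, by instantiating the evar [M], a bound [Rabs e <= M] for a polynomial [e]
   from the bounds on its variables found in the context. *)
Ltac bound_polynomial :=
  repeat first [ eassumption | apply Rabs_minus_le | apply Rabs_plus_le
               | apply Rabs_opp_le | apply Rabs_mult_le | apply Rle_refl ].

Lemma K_factor_bound (w P B : R) : exists M, 0 < M /\
  forall g gs gt gts ps pt,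
  Rabs g <= B -> Rabs gs <= B -> Rabs gt <= B -> Rabs gts <= B ->
  Rabs ps <= P -> Rabs pt <= P ->
  Rabs (K1_factor w g gs ps) <= M /\ Rabs (K2_factor w g gs gt gts ps pt) <= M.
Proof.
  eexists (Rmax 1 (Rmax _ _)); split; [apply Rlt_le_trans with 1; [lra | apply Rmax_l] |].
  intros; unfold K1_factor, K2_factor; split.
  - eapply Rle_trans; [| eapply Rle_trans; [apply Rmax_l | apply Rmax_r]].
    bound_polynomial.
  - eapply Rle_trans; [| eapply Rle_trans; [apply Rmax_r | apply Rmax_r]].
    bound_polynomial.
Qed.

Definition cross_term (a b c d : R -> R) (W t s : R) : R := (a s * b t - c t * d s) / W.

Lemma cross_term_derive_s (a b c d : R -> R) (W t s : R) :
  ex_derive a s -> ex_derive d s ->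
  is_derive (fun s' => cross_term a b c d W t s') s
            (cross_term (Derive a) b c (Derive d) W t s).
Proof.
  intros; unfold cross_term; auto_derive; [repeat split; auto |].
  fold_Derive; unfold Rdiv; ring.
Qed.

Lemma cross_term_derive_t (a b c d : R -> R) (W t s : R) :
  ex_derive b t -> ex_derive c t ->
  is_derive (fun t' => cross_term a b c d W t' s) t
            (cross_term a (Derive b) (Derive c) d W t s).
Proof.
  intros; unfold cross_term; auto_derive; [repeat split; auto |].
  fold_Derive; unfold Rdiv; ring.
Qed.

Lemma cross_term_bound (a b c d : R -> R) (W t s C : R) : W <> 0 ->
  Rabs (a s) <= C -> Rabs (b t) <= C -> Rabs (c t) <= C -> Rabs (d s) <= C ->
  Rabs (cross_term a b c d W t s) <= (C * C + C * C) / Rabs W.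
Proof.
  intros hW ha hb hc hd; unfold cross_term, Rdiv.
  rewrite Rabs_mult, Rabs_inv.
  apply Rmult_le_compat_r; [apply Rlt_le, Rinv_0_lt_compat, Rabs_pos_lt, hW |].
  apply Rabs_minus_le; apply Rabs_mult_le; assumption.
Qed.

Section FundamentalSolution.

Variables (p : R -> R) (w : R).
Hypothesis hw : 0 < w.
Hypothesis hp_diff : forall t, ex_derive p t.
Hypothesis hp_C1 : forall t, continuous (Derive p) t.
Hypothesis hp_pos : forall t, 0 <= t -> 0 < p t.
Hypothesis hp_dec : forall t, 0 <= t -> Derive p t < 0.
Hypothesis hp_sq : ex_RInt_gen (fun t => p t ^ 2) (at_point 0) (Rbar_locally p_infty).

Lemma is_Gu_cross_term (G : R -> R -> R) : is_Gu p w G ->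
  exists u v W, is_solution p w u /\ is_solution p w v /\ W <> 0 /\
    G = cross_term u v u v W.
Proof.
  intros hG.
  assert (hsol : forall s, is_solution p w (fun t => G t s))
    by (intros s; destruct (hG s) as [h1 [h2 _]]; split; assumption).
  set (u := fun t => G t 0).
  destruct (classic (exists c, u c <> 0)) as [[c hc] | hu0].
  2: { destruct (hG 0) as [_ [_ [_ hu']]]; fold u in hu'.
       rewrite (Derive_ext u (fun _ => 0)), Derive_const in hu'; [lra |].
       intros t; apply NNPP; intros ht; apply hu0; exists t; exact ht. }
  set (v := fun t => G t c).
  exists u, v, (wronskian u v c).
  assert (hu : is_solution p w u) by apply hsol.
  assert (hv : is_solution p w v) by apply hsol.
  assert (hW : wronskian u v c <> 0).
  { destruct (hG c) as [_ [_ [hcc hcc']]].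
    unfold wronskian, v; rewrite hcc, hcc', Rmult_1_r, Rmult_0_r, Rminus_0_r; exact hc. }
  split; [exact hu | split; [exact hv | split; [exact hW |]]].
  apply functional_extensionality; intros t; apply functional_extensionality; intros s.
  destruct (hG s) as [_ [_ [hss hss']]].
  unfold cross_term; rewrite (wronskian_constant p w u v hu hv c s) in hW |- *.
  apply (solution_representation p w hw hp_diff hp_C1 u v (fun t => G t s)); auto.
Qed.

Lemma cross_term_K_bound (u v : R -> R) (W : R) :
  is_solution p w u -> is_solution p w v -> W <> 0 ->
  exists M, 0 < M /\ forall t s, 0 <= s -> s <= t ->
    Rabs (K1 p w (cross_term u v u v W) t s) <= M * Efun p t s /\
    Rabs (K2 p w (cross_term u v u v W) t s) <= M * Efun p t s.
Proof.
  intros hu hv hW.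
  assert (hp := continuous_of_ex_derive p hp_diff).
  destruct (solution_bounded p w hw hp_diff hp_pos hp_dec hp_sq u hu) as [Cu hCu].
  destruct (solution_bounded p w hw hp_diff hp_pos hp_dec hp_sq v hv) as [Cv hCv].
  destruct hu as [du _], hv as [dv _].
  set (C := Rmax Cu Cv).
  destruct (K_factor_bound w (p 0) ((C * C + C * C) / Rabs W)) as [M [hM hMb]].
  exists M; split; [exact hM |]; intros t s hs hst.
  assert (hCu' : forall x, 0 <= x -> Rabs (u x) <= C /\ Rabs (Derive u x) <= C).
  { intros x hx; destruct (hCu x hx); pose proof (Rmax_l Cu Cv); unfold C; split; lra. }
  assert (hCv' : forall x, 0 <= x -> Rabs (v x) <= C /\ Rabs (Derive v x) <= C).
  { intros x hx; destruct (hCv x hx); pose proof (Rmax_r Cu Cv); unfold C; split; lra. }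
  destruct (hCu' s hs), (hCu' t ltac:(lra)), (hCv' s hs), (hCv' t ltac:(lra)).
  rewrite (K1_eq p w _ (cross_term (Derive u) v u (Derive v) W) hp)
    by (intros; apply cross_term_derive_s; auto).
  rewrite (K2_eq p w _ (cross_term (Derive u) v u (Derive v) W)
             (cross_term u (Derive v) (Derive u) v W)
             (cross_term (Derive u) (Derive v) (Derive u) (Derive v) W) hp)
    by (intros; first [apply cross_term_derive_s | apply cross_term_derive_t]; auto).
  destruct (hMb (cross_term u v u v W t s) (cross_term (Derive u) v u (Derive v) W t s)
                (cross_term u (Derive v) (Derive u) v W t s)
                (cross_term (Derive u) (Derive v) (Derive u) (Derive v) W t s) (p s) (p t))
    as [hK1 hK2];
    try (apply cross_term_bound; auto); try (apply Rabs_p_le_p0; auto; lra).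
  assert (hE : 0 < Efun p t s) by apply exp_pos.
  rewrite !Rabs_mult, (Rabs_right (Efun p t s)), !(Rmult_comm M) by lra.
  split; apply Rmult_le_compat_l; lra.
Qed.

End FundamentalSolution.

Theorem mainTheorem6 (w : R) (p : R -> R) (G : R -> R -> R)
  (hw : 0 < w)
  (hp_diff : forall t, ex_derive p t)
  (hp_C1 : forall t, continuous (Derive p) t)
  (hp_pos : forall t, 0 <= t -> 0 < p t)
  (hp_dec : forall t, 0 <= t -> Derive p t < 0)
  (hp_int : filterlim (fun T => RInt p 0 T) (Rbar_locally p_infty) (Rbar_locally p_infty))
  (hp_sq : ex_RInt_gen (fun t => (p t) ^ 2) (at_point 0) (Rbar_locally p_infty))
  (hG : is_Gu p w G) :
  exists M : R, 0 < M /\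
    forall t s : R, 0 <= s -> s <= t ->
      Rabs (K1 p w G t s) <= M * Efun p t s /\
      Rabs (K2 p w G t s) <= M * Efun p t s.
Proof.
  destruct (is_Gu_cross_term p w hw hp_diff hp_C1 G hG) as (u & v & W & hu & hv & hW & ->).
  exact (cross_term_K_bound p w hw hp_diff hp_pos hp_dec hp_sq u v W hu hv hW).
Qed.
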